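(* Given an NC-spectrum graph $G=(V,E)$ with nodes $x_0,\dots,x_k,y_k,\dots,y_0$, Algorithm Compute-M (described in the context) computes the table $M$ (defined in the context) in $O(|V|^2)$ time.
   Context: Fix a finite set $\mathcal{R}$ of positive reals (the amino acid masses). A real $m$ is an amino-acid mass sum if $m=r_1+\cdots+r_t$ for some $t\ge1$, $r_i\in\mathcal{R}$ (repetitions allowed). Given a peptide mass $W$ and $k$ ion masses $w_1,\dots,w_k$, the NC-spectrum graph $G=(V,E)$ has vertex set $V=\{N_0,\dots,N_k,C_0,\dots,C_k\}$ ($|V|=2k+2$) with coordinates $\mathrm{cord}(N_0)=0$, $\mathrm{cord}(C_0)=W-18$, $\mathrm{cord}(N_j)=w_j-1$, $\mathrm{cord}(C_j)=W-w_j$ ($1\le j\le k$); for $j\ge1$, $N_j,C_j$ are derived from the $j$-th ion. There is an edge from $u$ to $v$ ($E(u,v)=1$, else $E(u,v)=0$) iff $u,v$ are not derived from the same ion, $\mathrm{cord}(u)<\mathrm{cord}(v)$, and $\mathrm{cord}(v)-\mathrm{cord}(u)$ is an amino-acid mass sum. The nodes are listed in increasing coordinate order as $x_0,x_1,\dots,x_k,y_k,\dots,y_1,y_0$, with $x_0=N_0$, $y_0=C_0$ and $\{x_j,y_j\}$ the pair derived from one ion ($j\ge1$); every edge goes from a node to a later node in this list; edge queries take $O(1)$ time. The table $M$: for $0\le i,j\le k$, $M(i,j)=1$ if there exist a directed path $L$ from $x_0$ to $x_i$ and a directed path $R$ from $y_j$ to $y_0$ (a path may be a single node) such that $L\cup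 R$ contains exactly one of $x_p$ and $y_p$ for every $1\le p\le\max(i,j)$, and $M(i,j)=0$ otherwise. Algorithm Compute-M: (1) set $M(0,0)=1$ and $M(i,j)=0$ for all other $(i,j)$; (2) compute $M(1,0)$ and $M(0,1)$ (directly from the definition); (3) for $j=2$ to $k$: (4) for $i=0$ to $j-2$: (a) if $M(i,j-1)=1$ and $E(x_i,x_j)=1$, set $M(j,j-1)=1$; (b) if $M(i,j-1)=1$ and $E(y_j,y_{j-1})=1$, set $M(i,j)=1$; (c) if $M(j-1,i)=1$ and $E(x_{j-1},x_j)=1$, set $M(j,i)=1$; (d) if $M(j-1,i)=1$ and $E(y_j,y_i)=1$, set $M(j-1,j)=1$. *)

From Stdlib Require Import Reals List Arith Bool.
Import ListNotations.
Open Scope bool_scope.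

(* m is an amino-acid mass sum over the finite set Rs of amino-acid masses:
   m = r_1 + ... + r_t, t >= 1, each r_i in Rs (repetitions allowed). *)
Definition mass_sum (Rs : list R) (m : R) : Prop :=
  exists l : list R, l <> [] /\ Forall (fun r => In r Rs) l /\
                     fold_right Rplus 0%R l = m.

Inductive ncnode := Nn (j : nat) | Cn (j : nat).

Definition ion (u : ncnode) : nat := match u with Nn j => j | Cn j => j end.

Definition in_V (k : nat) (u : ncnode) : Prop := (ion u <= k)%nat.

Definition cord (W : R) (w : nat -> R) (u : ncnode) : R :=
  match u with
  | Nn 0 => 0%R
  | Nn j => (w j - 1)%R
  | Cn 0 => (W - 18)%R
  | Cn j => (W - w j)%R
  end.

Definition same_ion (u v : ncnode) : Prop := (1 <= ion u)%nat /\ ion u = ion v.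

Definition Edge (Rs : list R) (W : R) (w : nat -> R) (k : nat)
  (u v : ncnode) : Prop :=
  in_V k u /\ in_V k v /\ ~ same_ion u v /\
  (cord W w u < cord W w v)%R /\ mass_sum Rs (cord W w v - cord W w u)%R.

Definition xn (side : nat -> bool) (j : nat) : ncnode :=
  match j with 0 => Nn 0 | _ => if side j then Nn j else Cn j end.
Definition yn (side : nat -> bool) (j : nat) : ncnode :=
  match j with 0 => Cn 0 | _ => if side j then Cn j else Nn j end.

Definition listed (W : R) (w : nat -> R) (k : nat) (side : nat -> bool) : Prop :=
  (forall i j, (i <= j <= k)%nat ->
     (cord W w (xn side i) <= cord W w (xn side j))%R) /\
  (cord W w (xn side k) <= cord W w (yn side k))%R /\
  (forall i j, (i <= j <= k)%nat ->
     (cord W w (yn side j) <= cord W w (yn side i))%R).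

Fixpoint chain (E : ncnode -> ncnode -> Prop) (a : ncnode) (l : list ncnode)
  : Prop :=
  match l with
  | [] => True
  | b :: l' => E a b /\ chain E b l'
  end.

Definition dpath (E : ncnode -> ncnode -> Prop) (a b : ncnode)
  (p : list ncnode) : Prop :=
  exists l, p = a :: l /\ chain E a l /\ last p a = b.

Definition Mdef (Rs : list R) (W : R) (w : nat -> R) (k : nat)
  (side : nat -> bool) (i j : nat) : Prop :=
  exists L Rp : list ncnode,
    dpath (Edge Rs W w k) (xn side 0) (xn side i) L /\
    dpath (Edge Rs W w k) (yn side j) (yn side 0) Rp /\
    forall p, (1 <= p <= Nat.max i j)%nat ->
      (In (xn side p) (L ++ Rp) /\ ~ In (yn side p) (L ++ Rp)) \/
      (~ In (xn side p) (L ++ Rp) /\ In (yn side p) (L ++ Rp)).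

(* State: the table M and the number of elementary operations performed.
   Cost model: every table write, table read, O(1) edge query, and loop
   iteration costs one tick. *)
Record state := St { tab : nat -> nat -> bool; ticks : nat }.

Definition write (s : state) (a b : nat) (v : bool) : state :=
  St (fun x y => if Nat.eqb x a && Nat.eqb y b then v else tab s x y)
     (S (ticks s)).

(* "if M(a,b) = 1 and E(u,v) = 1, set M(c,d) = 1" : one read, one edge query,
   possibly one write. *)
Definition cond_set (e : ncnode -> ncnode -> bool) (s : state)
  (a b : nat) (u v : ncnode) (c d : nat) : state :=
  let s1 := St (tab s) (ticks s + 2) in
  if tab s a b && e u v then write s1 c d true else s1.

Definition body (e : ncnode -> ncnode -> bool) (side : nat -> bool)
  (j i : nat) (s : state) : state :=
  let s := St (tab s) (S (ticks s)) in
  let s := cond_set e s i (j - 1) (xn side i) (xn side j) j (j - 1) in          (* (a) *)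
  let s := cond_set e s i (j - 1) (yn side j) (yn side (j - 1)) i j in          (* (b) *)
  let s := cond_set e s (j - 1) i (xn side (j - 1)) (xn side j) j i in          (* (c) *)
  cond_set e s (j - 1) i (yn side j) (yn side i) (j - 1) j.                     (* (d) *)

Definition compute_M (e : ncnode -> ncnode -> bool) (side : nat -> bool)
  (k : nat) : state :=
  let s0 := St (fun _ _ => false) 0 in
  let s1 := fold_left
              (fun s i => fold_left (fun s j => write s i j (Nat.eqb i 0 && Nat.eqb j 0))
                                    (seq 0 (S k)) s)
              (seq 0 (S k)) s0 in
  (* (2) M(1,0) and M(0,1), directly from the definition:
     M(1,0) = E(x_0,x_1) and M(0,1) = E(y_1,y_0) *)
  let s2 := if Nat.leb 1 k then
              let s := St (tab s1) (ticks s1 + 2) in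
              let s := write s 1 0 (e (xn side 0) (xn side 1)) in
              write s 0 1 (e (yn side 1) (yn side 0))
            else s1 in
  (* (3)-(4) for j = 2..k, for i = 0..j-2 *)
  fold_left
    (fun s j => fold_left (fun s i => body e side j i s)
                          (seq 0 (j - 1)) (St (tab s) (S (ticks s))))
    (seq 2 (k - 1)) s2.

From Stdlib Require Import Reals List Arith Bool Lia Lra Btauto.
Import ListNotations.

(* Edges strictly increase the coordinate and the nodes are listed in coordinate order,
   so a path from x_0 to x_i only visits nodes x_p with p <= i, and a path from y_j to
   y_0 only nodes y_p with p <= j.  Hence, for b < j, M(j,b) holds iff x_j is entered by
   an edge from some x_q with M(q,b) and max(q,b) = j-1 (symmetrically for M(a,j) with
   a < j), while M(j,j) fails for j >= 1.  On the cells visited by Compute-M these two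
   extension rules are exactly the updates (a)-(d), so after round j the table agrees
   with M on every cell with max(i,j) <= j.  The cost is (k+1)^2 initialisations plus
   k-1 rounds of at most k iterations of constant cost. *)

Lemma fold_left_seq_ind {A : Type} (P : nat -> A -> Prop) (f : A -> nat -> A) a n s :
  P a s -> (forall m s, a <= m < a + n -> P m s -> P (S m) (f s m)) ->
  P (a + n) (fold_left f (seq a n) s).
Proof.
  intros Hs Hf. induction n as [|n IH].
  - now rewrite Nat.add_0_r.
  - rewrite seq_S, fold_left_app, Nat.add_succ_r. cbn [fold_left].
    apply Hf; [lia|]. apply IH. intros m s' Hm. apply Hf. lia.
Qed.

Lemma ion_xn side p : ion (xn side p) = p.
Proof. destruct p as [|p]; cbn; [|destruct (side (S p))]; reflexivity. Qed.

Lemma ion_yn side p : ion (yn side p) = p.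
Proof. destruct p as [|p]; cbn; [|destruct (side (S p))]; reflexivity. Qed.

Lemma xn_inj side p q : xn side p = xn side q -> p = q.
Proof. intros H. now rewrite <- (ion_xn side p), H, ion_xn. Qed.

Lemma yn_inj side p q : yn side p = yn side q -> p = q.
Proof. intros H. now rewrite <- (ion_yn side p), H, ion_yn. Qed.

Lemma xn_neq_yn side p q : xn side p <> yn side q.
Proof.
  intros H. pose proof (f_equal ion H) as Hpq. rewrite ion_xn, ion_yn in Hpq. subst q.
  destruct p as [|p]; cbn in H; [|destruct (side (S p))]; discriminate.
Qed.

Lemma ncnode_xn_or_yn side u : u = xn side (ion u) \/ u = yn side (ion u).
Proof. destruct u as [[|j]|[|j]]; cbn; auto; destruct (side (S j)); auto. Qed.

Lemma in_V_xn k side p : p <= k -> in_V k (xn side p).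
Proof. unfold in_V. now rewrite ion_xn. Qed.

Lemma in_V_yn k side p : p <= k -> in_V k (yn side p).
Proof. unfold in_V. now rewrite ion_yn. Qed.

Lemma last_cons_default {A : Type} (a : A) l d d' : last (a :: l) d = last (a :: l) d'.
Proof. revert a. induction l as [|b l IH]; intros a; [reflexivity|]. apply (IH b). Qed.

Section DirectedPaths.

Variable E : ncnode -> ncnode -> Prop.

Lemma dpath_single a : dpath E a a [a].
Proof. now exists []. Qed.

Lemma dpath_cons a b c p : E a b -> dpath E b c p -> dpath E a c (a :: p).
Proof.
  intros Hab (l & -> & Hl & Hlast). exists (b :: l). repeat split; auto.
  change (last (b :: l) a = c). now rewrite (last_cons_default b l a b).
Qed.

Lemma dpath_cons_inv a b p : dpath E a b p ->
  (p = [a] /\ a = b) \/ exists c p', E a c /\ dpath E c b p' /\ p = a :: p'.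
Proof.
  intros (l & -> & Hl & Hlast). destruct l as [|c l]; [now left|right].
  destruct Hl as [Hac Hl]. exists c, (c :: l). repeat split; auto.
  exists l. repeat split; auto.
  change (last (c :: l) a = b) in Hlast. now rewrite (last_cons_default c l c a).
Qed.

Lemma dpath_snoc a b c p : dpath E a b p -> E b c -> dpath E a c (p ++ [c]).
Proof.
  revert a. induction p as [|u p IH]; intros a Hp Hbc.
  { destruct Hp as (l & Hl & _); discriminate. }
  destruct (dpath_cons_inv _ _ _ Hp) as [[Hu ->]|(d & p' & Had & Hp' & Hu)];
    injection Hu as -> ->.
  - eapply dpath_cons; [exact Hbc|apply dpath_single].
  - eapply dpath_cons; [exact Had|]. now apply IH.
Qed.

Lemma dpath_snoc_inv a b p : dpath E a b p ->
  (p = [a] /\ a = b) \/ exists c p', dpath E a c p' /\ E c b /\ p = p' ++ [b].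
Proof.
  revert a. induction p as [|u p IH]; intros a Hp.
  { destruct Hp as (l & Hl & _); discriminate. }
  destruct (dpath_cons_inv _ _ _ Hp) as [Hsingle|(d & p' & Had & Hp' & Hu)]; [now left|right].
  injection Hu as -> ->.
  destruct (IH d Hp') as [[-> ->]|(c & p'' & Hp'' & Hcb & ->)].
  - exists a, [a]. repeat split; auto using dpath_single.
  - exists c, (a :: p''). repeat split; auto. now apply (dpath_cons a d).
Qed.

Lemma In_dpath_first a b p : dpath E a b p -> In a p.
Proof. intros (l & -> & _). now left. Qed.

Lemma In_dpath_last a b p : dpath E a b p -> In b p.
Proof.
  intros Hp. destruct (dpath_snoc_inv _ _ _ Hp) as [[-> ->]|(c & p' & _ & _ & ->)];
    [now left|apply in_or_app; right; now left].
Qed.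

End DirectedPaths.

Section NCSpectrumGraph.

Variables (Rs : list R) (W : R) (w : nat -> R) (k : nat).

Local Notation E := (Edge Rs W w k).
Local Notation cord := (cord W w).

Lemma Edge_irrefl u : ~ E u u.
Proof. intros (_ & _ & _ & Hlt & _). lra. Qed.

Lemma dpath_Edge_after a b p u : dpath E a b p -> In u p ->
  u = a \/ (in_V k u /\ (cord a < cord u)%R).
Proof.
  revert a. induction p as [|v p IH]; intros a Hp Hu.
  { destruct Hp as (l & Hl & _); discriminate. }
  destruct (dpath_cons_inv _ _ _ _ Hp) as [[Hv _]|(c & p' & Hac & Hp' & Hv)];
    injection Hv as -> ->; destruct Hu as [->|Hu]; auto; [destruct Hu|].
  right. destruct Hac as (_ & HVc & _ & Hac & _).
  destruct (IH c Hp' Hu) as [->|[HVu Hcu]]; split; auto; lra.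
Qed.

Lemma dpath_Edge_before a b p u : dpath E a b p -> In u p ->
  u = b \/ (in_V k u /\ (cord u < cord b)%R).
Proof.
  revert a u. induction p as [|v p IH]; intros a u Hp Hu.
  { destruct Hp as (l & Hl & _); discriminate. }
  destruct (dpath_cons_inv _ _ _ _ Hp) as [[Hv ->]|(c & p' & Hac & Hp' & Hv)];
    injection Hv as -> ->; [destruct Hu as [->|[]]; auto|].
  destruct Hu as [->|Hu]; [|exact (IH c u Hp' Hu)].
  right. destruct Hac as (HVa & _ & _ & Hac & _).
  destruct (IH c c Hp' (In_dpath_first _ _ _ _ Hp')) as [->|[_ Hcb]]; split; auto; lra.
Qed.

Variable side : nat -> bool.
Hypothesis Hlisted : listed W w k side.

Local Notation x := (xn side).
Local Notation y := (yn side).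

Lemma cord_xn_le i j : i <= j <= k -> (cord (x i) <= cord (x j))%R.
Proof. apply Hlisted. Qed.

Lemma cord_yn_ge i j : i <= j <= k -> (cord (y j) <= cord (y i))%R.
Proof. apply Hlisted. Qed.

Lemma cord_xn_le_yn i j : i <= k -> j <= k -> (cord (x i) <= cord (y j))%R.
Proof.
  intros Hi Hj. destruct Hlisted as (_ & Hk & _).
  pose proof (cord_xn_le i k ltac:(lia)). pose proof (cord_yn_ge j k ltac:(lia)). lra.
Qed.

Lemma left_path_nodes i L u : i <= k -> dpath E (x 0) (x i) L -> In u L ->
  exists2 p, p <= i & u = x p.
Proof.
  intros Hi HL Hu.
  destruct (dpath_Edge_before _ _ _ _ HL Hu) as [->|[HV Hlt]]; [now exists i|].
  destruct (ncnode_xn_or_yn side u) as [Hu'|Hu']; rewrite Hu' in Hlt.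
  - exists (ion u); [|exact Hu']. apply Nat.nlt_ge. intros Hgt.
    pose proof (cord_xn_le i (ion u) ltac:(unfold in_V in HV; lia)). lra.
  - pose proof (cord_xn_le_yn i (ion u) Hi HV). lra.
Qed.

Lemma right_path_nodes j Rp u : j <= k -> dpath E (y j) (y 0) Rp -> In u Rp ->
  exists2 p, p <= j & u = y p.
Proof.
  intros Hj HR Hu.
  destruct (dpath_Edge_after _ _ _ _ HR Hu) as [->|[HV Hlt]]; [now exists j|].
  destruct (ncnode_xn_or_yn side u) as [Hu'|Hu']; rewrite Hu' in Hlt.
  - pose proof (cord_xn_le_yn (ion u) j HV Hj). lra.
  - exists (ion u); [|exact Hu']. apply Nat.nlt_ge. intros Hgt.
    pose proof (cord_yn_ge j (ion u) ltac:(unfold in_V in HV; lia)). lra.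
Qed.

Lemma left_path_yn_notin i L p : i <= k -> dpath E (x 0) (x i) L -> ~ In (y p) L.
Proof.
  intros Hi HL Hp. destruct (left_path_nodes i L _ Hi HL Hp) as [q _ Hq].
  exact (xn_neq_yn side q p (eq_sym Hq)).
Qed.

Lemma left_path_xn_notin i L p : i <= k -> i < p -> dpath E (x 0) (x i) L -> ~ In (x p) L.
Proof.
  intros Hi Hip HL Hp. destruct (left_path_nodes i L _ Hi HL Hp) as [q Hq Hpq].
  apply xn_inj in Hpq. lia.
Qed.

Lemma right_path_xn_notin j Rp p : j <= k -> dpath E (y j) (y 0) Rp -> ~ In (x p) Rp.
Proof.
  intros Hj HR Hp. destruct (right_path_nodes j Rp _ Hj HR Hp) as [q _ Hq].
  exact (xn_neq_yn side p q Hq).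
Qed.

Lemma right_path_yn_notin j Rp p : j <= k -> j < p -> dpath E (y j) (y 0) Rp -> ~ In (y p) Rp.
Proof.
  intros Hj Hjp HR Hp. destruct (right_path_nodes j Rp _ Hj HR Hp) as [q Hq Hpq].
  apply yn_inj in Hpq. lia.
Qed.

Lemma left_path_split i L : 1 <= i <= k -> dpath E (x 0) (x i) L ->
  exists q L', q < i /\ dpath E (x 0) (x q) L' /\ E (x q) (x i) /\ L = L' ++ [x i].
Proof.
  intros Hi HL. destruct (dpath_snoc_inv _ _ _ _ HL) as [[_ H0]|(c & L' & HL' & Hc & ->)].
  { apply xn_inj in H0. lia. }
  destruct (left_path_nodes i _ c ltac:(lia) HL) as [q Hq ->].
  { apply in_or_app. left. exact (In_dpath_last _ _ _ _ HL'). }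
  assert (q <> i) by (intros ->; exact (Edge_irrefl _ Hc)).
  exists q, L'. split; [lia|auto].
Qed.

Lemma right_path_split j Rp : 1 <= j <= k -> dpath E (y j) (y 0) Rp ->
  exists q Rp', q < j /\ dpath E (y q) (y 0) Rp' /\ E (y j) (y q) /\ Rp = y j :: Rp'.
Proof.
  intros Hj HR. destruct (dpath_cons_inv _ _ _ _ HR) as [[_ H0]|(c & Rp' & Hc & HR' & ->)].
  { apply yn_inj in H0. lia. }
  destruct (right_path_nodes j _ c ltac:(lia) HR) as [q Hq ->].
  { right. exact (In_dpath_first _ _ _ _ HR'). }
  assert (q <> j) by (intros ->; exact (Edge_irrefl _ Hc)).
  exists q, Rp'. split; [lia|auto].
Qed.

Definition one_per_ion (L Rp : list ncnode) (n : nat) : Prop :=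
  forall p, 1 <= p <= n ->
    (In (x p) L /\ ~ In (y p) Rp) \/ (~ In (x p) L /\ In (y p) Rp).

Lemma one_per_ion_snoc_inv L Rp j n m :
  one_per_ion (L ++ [x j]) Rp n -> m <= n -> m < j -> one_per_ion L Rp m.
Proof.
  intros H Hmn Hmj p Hp. assert (Hne : x j <> x p) by (intros Hjp; apply xn_inj in Hjp; lia).
  destruct (H p ltac:(lia)) as [[Hx Hy]|[Hx Hy]]; rewrite in_app_iff in Hx; cbn in Hx; tauto.
Qed.

Lemma one_per_ion_snoc L Rp j :
  one_per_ion L Rp (j - 1) -> ~ In (y j) Rp -> one_per_ion (L ++ [x j]) Rp j.
Proof.
  intros H Hy p Hp. rewrite in_app_iff. cbn [In].
  destruct (Nat.eq_dec p j) as [->|Hpj]; [tauto|].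
  assert (Hne : x j <> x p) by (intros Hjp; apply xn_inj in Hjp; lia).
  destruct (H p ltac:(lia)); tauto.
Qed.

Lemma one_per_ion_cons_inv L Rp j n m :
  one_per_ion L (y j :: Rp) n -> m <= n -> m < j -> one_per_ion L Rp m.
Proof.
  intros H Hmn Hmj p Hp. assert (Hne : y j <> y p) by (intros Hjp; apply yn_inj in Hjp; lia).
  destruct (H p ltac:(lia)) as [[Hx Hy]|[Hx Hy]]; cbn in Hy; tauto.
Qed.

Lemma one_per_ion_cons L Rp j :
  one_per_ion L Rp (j - 1) -> ~ In (x j) L -> one_per_ion L (y j :: Rp) j.
Proof.
  intros H Hx p Hp. cbn [In].
  destruct (Nat.eq_dec p j) as [->|Hpj]; [tauto|].
  assert (Hne : y j <> y p) by (intros Hjp; apply yn_inj in Hjp; lia).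
  destruct (H p ltac:(lia)); tauto.
Qed.

Definition Mcover (i j : nat) : Prop :=
  exists L Rp, dpath E (x 0) (x i) L /\ dpath E (y j) (y 0) Rp /\
               one_per_ion L Rp (Nat.max i j).

Lemma Mdef_iff_Mcover i j : i <= k -> j <= k ->
  (Mdef Rs W w k side i j <-> Mcover i j).
Proof.
  intros Hi Hj. unfold Mdef, Mcover, one_per_ion.
  split; intros (L & Rp & HL & HR & Hcov); exists L, Rp; do 2 (split; [assumption|]);
    intros p Hp; specialize (Hcov p Hp); rewrite ?in_app_iff in *;
    pose proof (left_path_yn_notin i L p Hi HL); pose proof (right_path_xn_notin j Rp p Hj HR);
    tauto.
Qed.

Lemma Mcover_00 : Mcover 0 0.
Proof.
  exists [x 0], [y 0]. do 2 (split; [apply dpath_single|]). intros p Hp. lia.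
Qed.

Lemma Mcover_diag j : 1 <= j -> ~ Mcover j j.
Proof.
  intros Hj (L & Rp & HL & HR & Hcov). rewrite Nat.max_id in Hcov.
  pose proof (In_dpath_last _ _ _ _ HL). pose proof (In_dpath_first _ _ _ _ HR).
  destruct (Hcov j ltac:(lia)); tauto.
Qed.

Lemma Mcover_extend_x j b : 1 <= j <= k -> b < j ->
  (Mcover j b <->
   exists q, q < j /\ Nat.max q b = j - 1 /\ Mcover q b /\ E (x q) (x j)).
Proof.
  intros Hj Hb. split.
  - intros (L & Rp & HL & HR & Hcov).
    destruct (left_path_split j L Hj HL) as (q & L' & Hq & HL' & Hqj & ->).
    assert (Hmax : Nat.max q b = j - 1).
    { destruct (Nat.eq_dec j 1) as [->|Hj1]; [lia|].
      assert (Hne : x j <> x (j - 1)) by (intros Hjj; apply xn_inj in Hjj; lia).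
      destruct (Hcov (j - 1) ltac:(lia)) as [[Hx _]|[_ Hy]].
      - rewrite in_app_iff in Hx. cbn in Hx.
        destruct (Nat.lt_ge_cases q (j - 1)); [|lia].
        pose proof (left_path_xn_notin q L' (j - 1) ltac:(lia) ltac:(lia) HL'). tauto.
      - destruct (Nat.lt_ge_cases b (j - 1)); [|lia].
        now pose proof (right_path_yn_notin b Rp (j - 1) ltac:(lia) ltac:(lia) HR). }
    exists q. do 2 (split; [assumption|]). split; [|exact Hqj].
    exists L', Rp. do 2 (split; [assumption|]).
    eapply one_per_ion_snoc_inv; [exact Hcov|lia|lia].
  - intros (q & Hq & Hmax & (L & Rp & HL & HR & Hcov) & Hqj).
    exists (L ++ [x j]), Rp. split; [now apply (dpath_snoc _ _ (x q))|split; [exact HR|]].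
    replace (Nat.max j b) with j by lia. apply one_per_ion_snoc; [now rewrite <- Hmax|].
    apply (right_path_yn_notin b); [lia|lia|exact HR].
Qed.

Lemma Mcover_extend_y a j : 1 <= j <= k -> a < j ->
  (Mcover a j <->
   exists q, q < j /\ Nat.max a q = j - 1 /\ Mcover a q /\ E (y j) (y q)).
Proof.
  intros Hj Ha. split.
  - intros (L & Rp & HL & HR & Hcov).
    destruct (right_path_split j Rp Hj HR) as (q & Rp' & Hq & HR' & Hjq & ->).
    assert (Hmax : Nat.max a q = j - 1).
    { destruct (Nat.eq_dec j 1) as [->|Hj1]; [lia|].
      assert (Hne : y j <> y (j - 1)) by (intros Hjj; apply yn_inj in Hjj; lia).
      destruct (Hcov (j - 1) ltac:(lia)) as [[Hx _]|[_ Hy]].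
      - destruct (Nat.lt_ge_cases a (j - 1)); [|lia].
        now pose proof (left_path_xn_notin a L (j - 1) ltac:(lia) ltac:(lia) HL).
      - cbn in Hy. destruct (Nat.lt_ge_cases q (j - 1)); [|lia].
        pose proof (right_path_yn_notin q Rp' (j - 1) ltac:(lia) ltac:(lia) HR'). tauto. }
    exists q. do 2 (split; [assumption|]). split; [|exact Hjq].
    exists L, Rp'. do 2 (split; [assumption|]).
    eapply one_per_ion_cons_inv; [exact Hcov|lia|lia].
  - intros (q & Hq & Hmax & (L & Rp & HL & HR & Hcov) & Hjq).
    exists L, (y j :: Rp). split; [exact HL|split; [now apply (dpath_cons _ _ (y q))|]].
    replace (Nat.max a j) with j by lia. apply one_per_ion_cons; [now rewrite <- Hmax|].
    apply (left_path_xn_notin a); [lia|lia|exact HL].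
Qed.

End NCSpectrumGraph.

Definition init_table (k : nat) : state :=
  fold_left
    (fun s i => fold_left (fun s j => write s i j (Nat.eqb i 0 && Nat.eqb j 0))
                          (seq 0 (S k)) s)
    (seq 0 (S k)) (St (fun _ _ => false) 0).

Definition base_step (e : ncnode -> ncnode -> bool) (side : nat -> bool) (k : nat)
  (s : state) : state :=
  if Nat.leb 1 k then
    let s := St (tab s) (ticks s + 2) in
    let s := write s 1 0 (e (xn side 0) (xn side 1)) in
    write s 0 1 (e (yn side 1) (yn side 0))
  else s.

Definition round (e : ncnode -> ncnode -> bool) (side : nat -> bool)
  (s : state) (j : nat) : state :=
  fold_left (fun s i => body e side j i s) (seq 0 (j - 1)) (St (tab s) (S (ticks s))).

Lemma compute_M_phases e side k :
  compute_M e side k =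
  fold_left (round e side) (seq 2 (k - 1)) (base_step e side k (init_table k)).
Proof. reflexivity. Qed.

Lemma cond_set_tab e s a b u v c d p q :
  tab (cond_set e s a b u v c d) p q =
  tab s p q || (tab s a b && e u v && Nat.eqb p c && Nat.eqb q d).
Proof.
  unfold cond_set. destruct (tab s a b && e u v); cbn; [|btauto].
  destruct (Nat.eqb p c), (Nat.eqb q d); btauto.
Qed.

Lemma body_tab e side j i s p q : i + 2 <= j ->
  tab (body e side j i s) p q =
  tab s p q
  || (tab s i (j - 1) && e (xn side i) (xn side j) && Nat.eqb p j && Nat.eqb q (j - 1))
  || (tab s i (j - 1) && e (yn side j) (yn side (j - 1)) && Nat.eqb p i && Nat.eqb q j)
  || (tab s (j - 1) i && e (xn side (j - 1)) (xn side j) && Nat.eqb p j && Nat.eqb q i)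
  || (tab s (j - 1) i && e (yn side j) (yn side i) && Nat.eqb p (j - 1) && Nat.eqb q j).
Proof.
  intros Hij. unfold body. rewrite !cond_set_tab. cbn [tab].
  replace (Nat.eqb i j) with false by (symmetry; apply Nat.eqb_neq; lia).
  replace (Nat.eqb (j - 1) j) with false by (symmetry; apply Nat.eqb_neq; lia).
  replace (Nat.eqb i (j - 1)) with false by (symmetry; apply Nat.eqb_neq; lia).
  replace (Nat.eqb (j - 1) i) with false by (symmetry; apply Nat.eqb_neq; lia).
  rewrite Nat.eqb_refl. btauto.
Qed.

Definition is_initial (s : state) : Prop :=
  forall a b, tab s a b = Nat.eqb a 0 && Nat.eqb b 0.

Lemma init_table_initial k : is_initial (init_table k).
Proof.
  assert (Hwrite : forall s i j, is_initial s ->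
            is_initial (write s i j (Nat.eqb i 0 && Nat.eqb j 0))).
  { intros s i j Hs a b. unfold write; cbn [tab].
    destruct (Nat.eqb_spec a i), (Nat.eqb_spec b j); subst; cbn; auto. }
  assert (Hfirst : is_initial (write (St (fun _ _ => false) 0) 0 0 (Nat.eqb 0 0 && Nat.eqb 0 0)))
    by (intros [|a] [|b]; reflexivity).
  unfold init_table. cbn [seq fold_left].
  apply (fold_left_seq_ind (fun _ => is_initial)).
  - apply (fold_left_seq_ind (fun _ => is_initial)); auto.
  - intros i s _ Hs. apply (fold_left_seq_ind (fun _ => is_initial)); auto.
Qed.

Lemma fold_left_ticks_le {A : Type} (f : state -> A -> state) c l s :
  (forall s a, In a l -> ticks (f s a) <= ticks s + c) ->
  ticks (fold_left f l s) <= ticks s + length l * c.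
Proof.
  revert s. induction l as [|a l IH]; intros s Hf; cbn [fold_left length]; [lia|].
  specialize (IH (f s a) (fun s' b Hb => Hf s' b (or_intror Hb))).
  specialize (Hf s a (or_introl eq_refl)). lia.
Qed.

Lemma cond_set_ticks e s a b u v c d : ticks (cond_set e s a b u v c d) <= ticks s + 3.
Proof. unfold cond_set. destruct (tab s a b && e u v); cbn; lia. Qed.

Lemma body_ticks e side j i s : ticks (body e side j i s) <= ticks s + 13.
Proof.
  unfold body.
  repeat match goal with |- context [ticks (cond_set ?e ?s ?a ?b ?u ?v ?c ?d)] =>
    pose proof (cond_set_ticks e s a b u v c d);
    generalize dependent (ticks (cond_set e s a b u v c d)) end.
  cbn. lia.
Qed.

Lemma round_ticks e side s j : ticks (round e side s j) <= ticks s + 1 + (j - 1) * 13.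
Proof.
  unfold round. etransitivity; [apply (fold_left_ticks_le _ 13)|].
  - intros s' i _. apply body_ticks.
  - rewrite length_seq. cbn. lia.
Qed.

Lemma init_table_ticks k : ticks (init_table k) <= S k * S k.
Proof.
  unfold init_table. etransitivity; [apply (fold_left_ticks_le _ (S k))|].
  - intros s i _. etransitivity; [apply (fold_left_ticks_le _ 1)|].
    + intros; cbn; lia.
    + rewrite length_seq. lia.
  - rewrite length_seq. cbn. lia.
Qed.

Lemma base_step_ticks e side k s : ticks (base_step e side k s) <= ticks s + 4.
Proof. unfold base_step. destruct (Nat.leb 1 k); cbn; lia. Qed.

Lemma compute_M_ticks e side k : ticks (compute_M e side k) <= 5 * (2 * k + 2) ^ 2.
Proof.
  rewrite compute_M_phases. etransitivity; [apply (fold_left_ticks_le _ (1 + 13 * k))|].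
  - intros s j Hj. apply in_seq in Hj. pose proof (round_ticks e side s j). lia.
  - rewrite length_seq. pose proof (base_step_ticks e side k (init_table k)).
    pose proof (init_table_ticks k).
    assert ((k - 1) * (1 + 13 * k) <= k * (1 + 13 * k)) by (apply Nat.mul_le_mono_r; lia).
    rewrite Nat.pow_2_r. nia.
Qed.

Section ComputeMCorrect.

Variables (e : ncnode -> ncnode -> bool) (side : nat -> bool) (k : nat).
Variable E : ncnode -> ncnode -> Prop.
Hypothesis e_spec : forall u v, in_V k u -> in_V k v -> (e u v = true <-> E u v).

Local Notation x := (xn side).
Local Notation y := (yn side).

Variable M : nat -> nat -> Prop.
Hypothesis M_00 : M 0 0.
Hypothesis M_diag : forall j, 1 <= j -> ~ M j j.
Hypothesis M_extend_x : forall j b, 1 <= j <= k -> b < j ->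
  (M j b <-> exists q, q < j /\ Nat.max q b = j - 1 /\ M q b /\ E (x q) (x j)).
Hypothesis M_extend_y : forall a j, 1 <= j <= k -> a < j ->
  (M a j <-> exists q, q < j /\ Nat.max a q = j - 1 /\ M a q /\ E (y j) (y q)).

Lemma M_10 : 1 <= k -> (M 1 0 <-> E (x 0) (x 1)).
Proof.
  intros Hk. rewrite M_extend_x by lia. split.
  - intros (q & Hq & _ & _ & Hq1). now replace q with 0 in Hq1 by lia.
  - intros H01. exists 0. repeat split; auto; lia.
Qed.

Lemma M_01 : 1 <= k -> (M 0 1 <-> E (y 1) (y 0)).
Proof.
  intros Hk. rewrite M_extend_y by lia. split.
  - intros (q & Hq & _ & _ & H1q). now replace q with 0 in H1q by lia.
  - intros H10. exists 0. repeat split; auto; lia.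
Qed.

Lemma M_jump_x j : 2 <= j <= k ->
  (M j (j - 1) <-> exists i, i < j - 1 /\ M i (j - 1) /\ E (x i) (x j)).
Proof.
  intros Hj. rewrite M_extend_x by lia. split.
  - intros (q & Hq & _ & Hqj & He). exists q. split; [|auto].
    destruct (Nat.eq_dec q (j - 1)) as [->|]; [|lia].
    exfalso. apply (M_diag (j - 1)); [lia|exact Hqj].
  - intros (i & Hi & Hij & He). exists i. repeat split; auto; lia.
Qed.

Lemma M_jump_y j : 2 <= j <= k ->
  (M (j - 1) j <-> exists i, i < j - 1 /\ M (j - 1) i /\ E (y j) (y i)).
Proof.
  intros Hj. rewrite M_extend_y by lia. split.
  - intros (q & Hq & _ & Hqj & He). exists q. split; [|auto].
    destruct (Nat.eq_dec q (j - 1)) as [->|]; [|lia].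
    exfalso. apply (M_diag (j - 1)); [lia|exact Hqj].
  - intros (i & Hi & Hij & He). exists i. repeat split; auto; lia.
Qed.

Lemma M_step_x j i : 2 <= j <= k -> i <= j - 2 ->
  (M j i <-> M (j - 1) i /\ E (x (j - 1)) (x j)).
Proof.
  intros Hj Hi. rewrite M_extend_x by lia. split.
  - intros (q & Hq & Hmax & HM & He). now replace q with (j - 1) in HM, He by lia.
  - intros [HM He]. exists (j - 1). repeat split; auto; lia.
Qed.

Lemma M_step_y j i : 2 <= j <= k -> i <= j - 2 ->
  (M i j <-> M i (j - 1) /\ E (y j) (y (j - 1))).
Proof.
  intros Hj Hi. rewrite M_extend_y by lia. split.
  - intros (q & Hq & Hmax & HM & He). now replace q with (j - 1) in HM, He by lia.
  - intros [HM He]. exists (j - 1). repeat split; auto; lia.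
Qed.

Definition computed_upto (n : nat) (T : nat -> nat -> bool) : Prop :=
  forall a b, T a b = true <-> Nat.max a b <= n /\ M a b.

(* The table during round j, after the iterations i < m: the cells (j,j-1) and (j-1,j)
   hold the disjunction of the updates (a) and (d) made so far. *)
Definition round_progress (j m a b : nat) : Prop :=
  (Nat.max a b < j /\ M a b) \/
  (a = j /\ b < m /\ M j b) \/
  (a < m /\ b = j /\ M a j) \/
  (a = j /\ b = j - 1 /\ exists i, i < m /\ M i (j - 1) /\ E (x i) (x j)) \/
  (a = j - 1 /\ b = j /\ exists i, i < m /\ M (j - 1) i /\ E (y j) (y i)).

Lemma round_progress_old j m a b : Nat.max a b < j -> (round_progress j m a b <-> M a b).
Proof. intros Hab. unfold round_progress. split; [|auto]. intros; intuition lia. Qed.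

Lemma exists_lt_S (P : nat -> Prop) m :
  (exists i, i < S m /\ P i) <-> (exists i, i < m /\ P i) \/ P m.
Proof.
  split.
  - intros (i & Hi & HP). destruct (Nat.eq_dec i m) as [->|]; [now right|left].
    exists i. split; [lia|exact HP].
  - intros [(i & Hi & HP)|HP]; [exists i|exists m]; split; auto; lia.
Qed.

Lemma round_progress_S j m a b :
  round_progress j (S m) a b <->
  round_progress j m a b \/
  (a = j /\ b = j - 1 /\ M m (j - 1) /\ E (x m) (x j)) \/
  (a = m /\ b = j /\ M m j) \/
  (a = j /\ b = m /\ M j m) \/
  (a = j - 1 /\ b = j /\ M (j - 1) m /\ E (y j) (y m)).
Proof.
  unfold round_progress. rewrite !exists_lt_S, !Nat.lt_succ_r, !Nat.le_lteq.
  intuition (subst; auto).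
Qed.

Definition computed_in_round (j m : nat) (T : nat -> nat -> bool) : Prop :=
  forall a b, T a b = true <-> round_progress j m a b.

Lemma computed_in_round_start j T : 1 <= j ->
  computed_upto (j - 1) T -> computed_in_round j 0 T.
Proof.
  intros Hj HT a b. rewrite (HT a b). unfold round_progress.
  split; [intros [Hab HM]; left; split; [lia|exact HM]|].
  intros [[Hab HM]|H]; [split; [lia|exact HM]|exfalso; firstorder lia].
Qed.

Lemma computed_in_round_body j m s : 2 <= j <= k -> m + 2 <= j ->
  computed_in_round j m (tab s) -> computed_in_round j (S m) (tab (body e side j m s)).
Proof.
  intros Hj Hm Hs a b. unfold computed_in_round in Hs.
  rewrite body_tab, round_progress_S by lia.
  assert (Hread1 : tab s m (j - 1) = true <-> M m (j - 1))
    by (rewrite Hs; apply round_progress_old; lia).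
  assert (Hread2 : tab s (j - 1) m = true <-> M (j - 1) m)
    by (rewrite Hs; apply round_progress_old; lia).
  rewrite !orb_true_iff, !andb_true_iff, !Nat.eqb_eq, Hread1, Hread2, Hs,
    (M_step_x j m), (M_step_y j m), !e_spec
    by first [lia | apply in_V_xn; lia | apply in_V_yn; lia].
  tauto.
Qed.

Lemma computed_in_round_done j T : 2 <= j <= k ->
  computed_in_round j (j - 1) T -> computed_upto j T.
Proof.
  intros Hj HT a b. rewrite (HT a b). unfold round_progress.
  rewrite <- (M_jump_x j), <- (M_jump_y j) by lia. split.
  - intros [[? ?]|[(-> & ? & ?)|[(? & -> & ?)|[(-> & -> & ?)|(-> & -> & ?)]]]];
      split; auto; lia.
  - intros [Hab HM]. destruct (Nat.lt_ge_cases (Nat.max a b) j); [now left|right].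
    assert (Hdiag : a <> b) by (intros <-; apply (M_diag a); [lia|exact HM]).
    assert (a = j \/ b = j) as [-> | ->] by lia.
    + destruct (Nat.lt_ge_cases b (j - 1)); [left; auto|].
      replace b with (j - 1) in * by lia. right; right; left. auto.
    + destruct (Nat.lt_ge_cases a (j - 1)); [right; left; auto|].
      replace a with (j - 1) in * by lia. right; right; right. auto.
Qed.

Lemma computed_round j s : 2 <= j <= k ->
  computed_upto (j - 1) (tab s) -> computed_upto j (tab (round e side s j)).
Proof.
  intros Hj Hs. apply computed_in_round_done; [exact Hj|]. unfold round.
  apply (fold_left_seq_ind (fun m s => computed_in_round j m (tab s)) _ 0 (j - 1)).
  - apply computed_in_round_start; [lia|exact Hs].
  - intros m s' Hm. apply computed_in_round_body; lia.
Qed.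

Lemma computed_init : computed_upto 0 (tab (init_table k)).
Proof.
  intros a b. rewrite (init_table_initial k a b), andb_true_iff, !Nat.eqb_eq.
  split; [intros [-> ->]; auto|intros [Hab _]; lia].
Qed.

Lemma computed_base : 1 <= k -> computed_upto 1 (tab (base_step e side k (init_table k))).
Proof.
  intros Hk a b. unfold base_step.
  replace (Nat.leb 1 k) with true by (symmetry; apply Nat.leb_le; lia).
  unfold write; cbn [tab]. rewrite (init_table_initial k a b).
  destruct a as [|[|a]], b as [|[|b]]; cbn [Nat.eqb andb].
  - split; [split; [lia|exact M_00]|reflexivity].
  - rewrite M_01, e_spec by first [lia | apply in_V_yn; lia]. intuition lia.
  - split; [discriminate|lia].
  - rewrite M_10, e_spec by first [lia | apply in_V_xn; lia]. intuition lia.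
  - split; [discriminate|intros [_ H11]; exfalso; exact (M_diag 1 (le_n 1) H11)].
  - split; [discriminate|lia].
  - split; [discriminate|lia].
  - split; [discriminate|lia].
  - split; [discriminate|lia].
Qed.

Lemma compute_M_correct : computed_upto k (tab (compute_M e side k)).
Proof.
  rewrite compute_M_phases. destruct (Nat.le_gt_cases 1 k) as [Hk|Hk].
  - replace k with (2 + (k - 1) - 1) at 1 by lia.
    apply (fold_left_seq_ind (fun j s => computed_upto (j - 1) (tab s))).
    + exact (computed_base Hk).
    + intros j s Hj Hs. replace (S j - 1) with j by lia. apply computed_round; [lia|exact Hs].
  - replace (k - 1) with 0 by lia. unfold base_step.
    replace (Nat.leb 1 k) with false by (symmetry; apply Nat.leb_gt; lia).
    replace k with 0 at 1 by lia. exact computed_init.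
Qed.

End ComputeMCorrect.

Theorem lemma2 :
  exists c : nat,
  forall (Rs : list R) (W : R) (w : nat -> R) (k : nat) (side : nat -> bool)
         (e : ncnode -> ncnode -> bool),
    Forall (fun r => (0 < r)%R) Rs ->
    listed W w k side ->
    (forall u v, in_V k u -> in_V k v -> (e u v = true <-> Edge Rs W w k u v)) ->
    (forall i j, (i <= k)%nat -> (j <= k)%nat ->
       (tab (compute_M e side k) i j = true <-> Mdef Rs W w k side i j)) /\
    (ticks (compute_M e side k) <= c * (2 * k + 2) ^ 2)%nat.
Proof.
  exists 5. intros Rs W w k side e _ Hlisted He. split; [|apply compute_M_ticks].
  intros i j Hi Hj. rewrite Mdef_iff_Mcover by assumption.
  assert (Hcorrect := compute_M_correct e side k _ He _ (Mcover_00 Rs W w k side)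
    (Mcover_diag Rs W w k side) (Mcover_extend_x Rs W w k side Hlisted)
    (Mcover_extend_y Rs W w k side Hlisted)).
  rewrite (Hcorrect i j). split; [intros [_ HM]; exact HM|intros HM; split; [lia|exact HM]].
Qed.
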